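(* Let $V$ and $H$ be real Hilbert spaces with scalar products $(\cdot,\cdot)_V$, $(\cdot,\cdot)_H$ and norms $\|\cdot\|_V$, $\|\cdot\|_H$, and let $\gamma:V\to H$ be a continuous, linear and compact operator. Let $\lambda_i$, $i=1,2,\dots$, be the eigenvalues of the problem: find $\lambda\in\mathbb{R}$, $u\in V$, $u\ne0$, with $(u,v)_V=\lambda(\gamma u,\gamma v)_H$ for all $v\in V$. Let $u_*\in V$ and $\lambda_*\in\mathbb{R}$ be arbitrary and let $w\in V$ satisfy $$(w,v)_V=(u_*,v)_V-\lambda_*(\gamma u_*,\gamma v)_H\quad\forall v\in V.$$ If $\gamma u_*\neq0$, then $$\min_i\left|\frac{\lambda_i-\lambda_*}{\lambda_i}\right|\le\frac{\|\gamma w\|_H}{\|\gamma u_*\|_H}.$$ *)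

From HB Require Import structures.
From mathcomp Require Import all_boot all_order all_algebra.
From mathcomp Require Import reals.
Set Implicit Arguments. Unset Strict Implicit. Unset Printing Implicit Defensive.
Import Order.TTheory GRing.Theory Num.Theory.
Local Open Scope ring_scope.

Section Hilbert.
Variables (R : realType) (V : lmodType R).

Definition is_inner_product (ip : V -> V -> R) : Prop :=
  [/\ (forall u v, ip u v = ip v u),
      (forall (a : R) u v w, ip (a *: u + v) w = a * ip u w + ip v w),
      (forall u, 0 <= ip u u) &
      (forall u, ip u u = 0 -> u = 0)].

Definition ipnorm (ip : V -> V -> R) (v : V) : R := Num.sqrt (ip v v).

Definition ip_complete (ip : V -> V -> R) : Prop :=
  forall u : nat -> V,
    (forall e : R, 0 < e -> exists N : nat, forall m n : nat,
        (N <= m)%N -> (N <= n)%N -> ipnorm ip (u m - u n) < e) ->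
    exists l : V, forall e : R, 0 < e -> exists N : nat, forall n : nat,
        (N <= n)%N -> ipnorm ip (u n - l) < e.

Definition is_hilbert (ip : V -> V -> R) : Prop :=
  is_inner_product ip /\ ip_complete ip.
End Hilbert.

Section Operators.
Variables (R : realType) (V H : lmodType R).
Variables (ipV : V -> V -> R) (ipH : H -> H -> R).

Definition op_continuous (f : V -> H) : Prop :=
  forall (x : V) (e : R), 0 < e -> exists d : R, 0 < d /\
    forall y : V, ipnorm ipV (y - x) < d -> ipnorm ipH (f y - f x) < e.

Definition op_compact (f : V -> H) : Prop :=
  forall u : nat -> V, (exists M : R, forall n, ipnorm ipV (u n) <= M) ->
    exists phi : nat -> nat, (forall n, (phi n < phi n.+1)%N) /\
      exists l : H, forall e : R, 0 < e -> exists N : nat, forall n : nat,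
        (N <= n)%N -> ipnorm ipH (f (u (phi n)) - l) < e.

Definition is_eigenvalue (g : V -> H) (lam : R) : Prop :=
  exists u : V, u <> 0 /\ forall v : V, ipV u v = lam * ipH (g u) (g v).
End Operators.

(* Let K be the operator with (K x, v)_V = (gamma x, gamma v)_H, given by the Riesz
   representation theorem; the eigenvalues lambda_i are the inverses of the positive
   eigenvalues k of K, and w = u - l K u for u = ustar, l = lamstar.  With
   c = |gamma w|^2 / |gamma u|^2 it suffices to find an eigenvector of K with
   (1 - l k)^2 <= c.  The operator L = (1 - l K)^2 - c commutes with K, and the
   symmetric form m(x, y) = (gamma x, gamma (L y))_H = (L K x, y)_V vanishes at u.
   If m takes a negative value, minimising its Rayleigh quotient (possible because
   gamma is compact) gives an eigenvector of L K with a negative eigenvalue, and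
   maximising |gamma x|_H on the unit sphere of that K-invariant eigenspace gives a
   common eigenvector of K and L, on which L acts by (1 - l k)^2 - c < 0.  Otherwise
   m is nonnegative, so m(u, .) = 0, i.e. L K u = 0, and factoring L produces an
   eigenvector with (1 - l k)^2 = c. *)

From HB Require Import structures.
From mathcomp Require Import all_boot all_order all_algebra.
From mathcomp Require Import boolp classical_sets reals.
From mathcomp Require Import ring lra.
Import Order.TTheory GRing.Theory Num.Theory.
Local Open Scope ring_scope.
Set Implicit Arguments. Unset Strict Implicit. Unset Printing Implicit Defensive.

Section RealFacts.
Variable R : realType.

Lemma quadratic_ge0_discr (A B C : R) : 0 <= C ->
  (forall t, 0 <= A + 2 * t * B + t ^+ 2 * C) -> B ^+ 2 <= A * C.
Proof.
move=> C0 hq.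
have [C0eq|Cn0] := eqVneq C 0.
  subst C; have [->|Bn0] := eqVneq B 0; first by rewrite expr0n mulr0.
  have := hq (- (A + 1) / (2 * B)).
  have -> : 2 * (- (A + 1) / (2 * B)) * B = - (A + 1) by field.
  by rewrite mulr0 addr0; lra.
have Cpos : 0 < C by rewrite lt_neqAle eq_sym Cn0 C0.
have := hq (- B / C).
have -> : A + 2 * (- B / C) * B + (- B / C) ^+ 2 * C = A - B ^+ 2 / C by field.
by rewrite subr_ge0 ler_pdivrMr.
Qed.

Lemma invSn_lt (e : R) : 0 < e ->
  exists N, forall n, (N <= n)%N -> n.+1%:R^-1 < e.
Proof.
move=> e0; exists (Num.truncn e^-1) => n Nn.
have einv_lt : e^-1 < n.+1%:R.
  by apply: lt_le_trans (truncnS_gt _) _; rewrite ler_nat ltnS.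
by rewrite -(invrK e) ltf_pV2 ?posrE ?invr_gt0.
Qed.

Lemma invSn_le (a b : nat) : (a <= b)%N -> b.+1%:R^-1 <= a.+1%:R^-1 :> R.
Proof. by move=> ab; rewrite lef_pV2 ?posrE ?ltr0Sn // ler_nat ltnS. Qed.

Lemma minimizing_sequence (T : Type) (P : T -> Prop) (f : T -> R) (B : R) :
  (exists v, P v) -> (forall v, P v -> B <= f v) ->
  exists m : R, (forall v, P v -> m <= f v) /\
    exists s : nat -> T, forall n, P (s n) /\ f (s n) < m + n.+1%:R^-1.
Proof.
move=> [v0 Pv0] fB.
pose E : set R := fun r => exists2 v, P v & f v = r.
have infE : has_inf E.
  by split; [exists (f v0), v0 | exists B => r [v Pv <-]; exact: fB].
exists (inf E); split; first by move=> v Pv; apply: (ge_inf infE.2); exists v.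
suff /choice[s hs] : forall n : nat, exists v, P v /\ f v < inf E + n.+1%:R^-1.
  by exists s.
move=> n; have n_pos : 0 < n.+1%:R^-1 :> R by rewrite invr_gt0.
have [r [v Pv <-] hr] := inf_adherent n_pos infE.
by exists v.
Qed.

Definition cvgR (g : nat -> R) (G : R) := forall e : R, 0 < e ->
  exists N : nat, forall n, (N <= n)%N -> `|g n - G| < e.

(* The limit form of the first-order condition at a minimum: the linear
   coefficient of a quadratic that is asymptotically nonnegative vanishes. *)
Lemma cvg_quadratic_eq0 (g : nat -> R) (G C : R) : cvgR g G -> 0 <= C ->
  (forall n t, - n.+1%:R^-1 < 2 * t * g n + t ^+ 2 * C) -> G = 0.
Proof.
move=> gG C0 hg.
suff lim_ge0 t : 0 <= 2 * t * G + t ^+ 2 * C.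
  have := @quadratic_ge0_discr 0 G C C0 (fun t => ltac:(rewrite add0r; exact: lim_ge0)).
  by rewrite mul0r => G2; apply/eqP; rewrite -sqrf_eq0 eq_le G2 sqr_ge0.
apply/ler_addgt0Pr => e e0.
have e2 : 0 < e / 2 by rewrite divr_gt0.
have t4 : 0 < 4 * (`|t| + 1) by rewrite mulr_gt0 // ltr_pwDr.
have [N1 HN1] := invSn_lt e2.
have [N2 HN2] := gG _ (divr_gt0 e0 t4).
pose n := maxn N1 N2.
have small := HN1 n (leq_maxl _ _).
have close := HN2 n (leq_maxr _ _).
have near : 2 * t * (g n - G) <= e / 2.
  apply: le_trans (ler_norm _) _; rewrite !normrM normr_nat.
  move: close; rewrite ltr_pdivlMr // => close.
  have := normr_ge0 t; have := normr_ge0 (g n - G); nra.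
have := hg n t; move: small near; move: (n.+1%:R^-1) => q; lra.
Qed.

End RealFacts.

Section SymmetricForms.
Variables (R : realType) (V : lmodType R).

Definition symbilinear (f : V -> V -> R) :=
  (forall u v, f u v = f v u) /\
  (forall (a : R) u v w, f (a *: u + v) w = a * f u w + f v w).

Variable f : V -> V -> R.
Hypothesis hf : symbilinear f.

Lemma bilC u v : f u v = f v u. Proof. exact: hf.1. Qed.

Lemma bil0l w : f 0 w = 0.
Proof.
have := hf.2 1 0 0 w; rewrite scaler0 addr0 mul1r => h.
by apply: (@addrI _ (f 0 w)); rewrite -h addr0.
Qed.

Lemma bilDl u v w : f (u + v) w = f u w + f v w.
Proof. by have := hf.2 1 u v w; rewrite scale1r mul1r. Qed.

Lemma bilZl a u w : f (a *: u) w = a * f u w.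
Proof. by have := hf.2 a u 0 w; rewrite addr0 bil0l addr0. Qed.

Lemma bilNl u w : f (- u) w = - f u w.
Proof. by rewrite -scaleN1r bilZl mulN1r. Qed.

Lemma bilBl u v w : f (u - v) w = f u w - f v w.
Proof. by rewrite bilDl bilNl. Qed.

Lemma bil0r w : f w 0 = 0. Proof. by rewrite bilC bil0l. Qed.

Lemma bilDr u v w : f w (u + v) = f w u + f w v.
Proof. by rewrite bilC bilDl bilC (bilC v). Qed.

Lemma bilZr a u w : f w (a *: u) = a * f w u.
Proof. by rewrite bilC bilZl bilC. Qed.

Lemma bilNr u w : f w (- u) = - f w u.
Proof. by rewrite bilC bilNl bilC. Qed.

Lemma bilBr u v w : f w (u - v) = f w u - f w v.
Proof. by rewrite bilDr bilNr. Qed.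

Lemma bilZZ a u : f (a *: u) (a *: u) = a ^+ 2 * f u u.
Proof. by rewrite bilZl bilZr mulrA expr2. Qed.

Lemma bil_diagBC u v : f (u - v) (u - v) = f (v - u) (v - u).
Proof. by rewrite -opprB bilNl bilNr opprK. Qed.

Lemma bil_expand x y t :
  f (x + t *: y) (x + t *: y) = f x x + 2 * t * f x y + t ^+ 2 * f y y.
Proof. rewrite !bilDl !bilDr !bilZl !bilZr (bilC y x); ring. Qed.

Lemma bil_parallelogram x y :
  f (x + y) (x + y) + f (x - y) (x - y) = 2 * f x x + 2 * f y y.
Proof. rewrite !bilDl !bilDr !bilNl !bilNr (bilC y x); ring. Qed.

Lemma bil_CauchySchwarz x y : (forall z, 0 <= f z z) ->
  f x y ^+ 2 <= f x x * f y y.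
Proof. by move=> pos; apply: quadratic_ge0_discr => // t; rewrite -bil_expand. Qed.

End SymmetricForms.

Lemma symbilinear_comb (R : realType) (V : lmodType R) (f g : V -> V -> R) (a : R) :
  symbilinear f -> symbilinear g -> symbilinear (fun x y => f x y + a * g x y).
Proof.
move=> hf hg; split=> [u v|b u v w]; first by rewrite (bilC hf) (bilC hg).
rewrite (bilDl hf) (bilDl hg) (bilZl hf) (bilZl hg); ring.
Qed.

Section InnerProduct.
Variables (R : realType) (V : lmodType R) (ip : V -> V -> R).
Hypothesis hip : is_inner_product ip.

Lemma ip_symbilinear : symbilinear ip.
Proof. by case: hip => h1 h2 _ _; split. Qed.

Let hb := ip_symbilinear.

Lemma ip_ge0 x : 0 <= ip x x. Proof. by case: hip. Qed.

Lemma ip_eq0 x : ip x x = 0 -> x = 0. Proof. by case: hip => _ _ _; apply. Qed.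

Lemma ip_gt0 x : x <> 0 -> 0 < ip x x.
Proof. by move=> x0; rewrite lt_neqAle ip_ge0 andbT eq_sym; apply/eqP => /ip_eq0. Qed.

Lemma ip_ext x z : (forall y, ip x y = ip z y) -> x = z.
Proof.
move=> H; apply/eqP; rewrite -subr_eq0; apply/eqP; apply: ip_eq0.
by rewrite (bilBl hb) H subrr.
Qed.

Lemma ip_CauchySchwarz x y : ip x y ^+ 2 <= ip x x * ip y y.
Proof. exact/(bil_CauchySchwarz hb)/ip_ge0. Qed.

Lemma ipD_le u v : ip (u + v) (u + v) <= 2 * ip u u + 2 * ip v v.
Proof. have := bil_parallelogram hb u v; have := ip_ge0 (u - v); lra. Qed.

Lemma ip_normalize (f : V -> V -> R) (hf : symbilinear f) x : 0 < ip x x ->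
  let c := (Num.sqrt (ip x x))^-1 in
  ip (c *: x) (c *: x) = 1 /\ f (c *: x) (c *: x) = f x x / ip x x.
Proof.
move=> x0 c; have c2 : c ^+ 2 = (ip x x)^-1 by rewrite exprVn sqr_sqrtr // ltW.
by rewrite !bilZZ // c2 mulVf ?gt_eqF // mulrC.
Qed.

Lemma ipnorm_lt x (e : R) : 0 < e -> (ipnorm ip x < e) = (ip x x < e ^+ 2).
Proof.
by move=> e0; rewrite -[RHS]ltr_sqrt ?exprn_gt0 // sqrtr_sqr ger0_norm // ltW.
Qed.

Definition cvgV (u : nat -> V) (l : V) := forall e : R, 0 < e ->
  exists N : nat, forall n, (N <= n)%N -> ip (u n - l) (u n - l) < e.

Lemma cvgV_ipnorm (u : nat -> V) l :
  (forall e : R, 0 < e -> exists N : nat, forall n, (N <= n)%N -> ipnorm ip (u n - l) < e) ->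
  cvgV u l.
Proof.
move=> ul e e0; have se : 0 < Num.sqrt e by rewrite sqrtr_gt0.
have [N HN] := ul _ se.
by exists N => n /HN; rewrite ipnorm_lt // sqr_sqrtr // ltW.
Qed.

Lemma cvgV_cauchy (u : nat -> V) : ip_complete ip ->
  (forall e : R, 0 < e -> exists N : nat, forall m n, (N <= m)%N -> (N <= n)%N ->
     ip (u m - u n) (u m - u n) < e) -> exists l, cvgV u l.
Proof.
move=> hc cauchy; suff [l ul] : exists l, forall e : R, 0 < e ->
    exists N : nat, forall n, (N <= n)%N -> ipnorm ip (u n - l) < e.
  by exists l; apply: cvgV_ipnorm.
apply: hc => e e0; have [N HN] := cauchy (e ^+ 2) (exprn_gt0 _ e0).
by exists N => m n Nm Nn; rewrite ipnorm_lt // HN.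
Qed.

Lemma bil_cvgl (f : V -> V -> R) (hf : symbilinear f) (s : nat -> V) l y (C : R) :
  (forall x, f x y ^+ 2 <= C * ip x x) -> cvgV s l -> cvgR (fun n => f (s n) y) (f l y).
Proof.
move=> fC sl e e0.
have C1 : 0 < `|C| + 1 by rewrite ltr_pwDr.
have [N HN] := sl (e ^+ 2 / (`|C| + 1)) (divr_gt0 (exprn_gt0 _ e0) C1).
exists N => n /HN; rewrite -(bilBl hf) ltr_pdivlMr // => small.
have := fC (s n - l); have := ip_ge0 (s n - l); have := ler_norm C.
rewrite -[f _ y ^+ 2]real_normK ?num_real //.
have := normr_ge0 (f (s n - l) y); have := normr_ge0 C.
move: small; move: `|C| `|f _ y| (ip _ _) => c a X; clear -e0; nra.
Qed.

End InnerProduct.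

Section Riesz.
Variables (R : realType) (V : lmodType R) (ip : V -> V -> R).
Hypotheses (hip : is_inner_product ip) (hc : ip_complete ip).
Variable F : V -> R.
Hypothesis hF : forall (a : R) u v, F (a *: u + v) = a * F u + F v.

Let hb := ip_symbilinear hip.

Let F0 : F 0 = 0.
Proof.
have := hF 1 0 0; rewrite scaler0 addr0 mul1r => h.
by apply: (@addrI _ (F 0)); rewrite -h addr0.
Qed.

Let FD u v : F (u + v) = F u + F v.
Proof. by have := hF 1 u v; rewrite scale1r mul1r. Qed.

Let FZ a u : F (a *: u) = a * F u.
Proof. by have := hF a u 0; rewrite addr0 F0 addr0. Qed.

(* k minimises the energy J v = (v, v) - 2 F v; a minimising sequence is Cauchy
   by the parallelogram law. *)
Lemma riesz_representation (C : R) : (forall v, F v ^+ 2 <= C * ip v v) ->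
  exists k, forall v, ip k v = F v.
Proof.
move=> FC.
pose J v := ip v v - 2 * F v.
have J_lb v : True -> - `|C| <= J v.
  move=> _; rewrite /J; have := FC v; have := ip_ge0 hip v.
  have := ler_norm C; have := normr_ge0 C.
  move: `|C| (F v) (ip v v) => c a x h1 h2 h3 h4.
  have h5 : a ^+ 2 <= c * x by apply: le_trans h4 _; nra.
  have := sqr_ge0 (x - c); have := sqr_ge0 (x + c - 2 * a); nra.
have [m [m_min [s hs]]] := minimizing_sequence (ex_intro _ 0 I) J_lb.
have J_midpoint x y : ip (x - y) (x - y) = 2 * (J x + J y - 2 * J (2^-1 *: (x + y))).
  rewrite /J FZ FD (bilZZ hb); have := bil_parallelogram hb x y; lra.
have [k sk] : exists k, cvgV ip s k.
  apply: (cvgV_cauchy hc) => e e0.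
  have [N HN] := invSn_lt (divr_gt0 e0 (ltr0n R 4)).
  exists N => a b Na Nb; rewrite J_midpoint.
  have := (hs a).2; have := (hs b).2; have := m_min (2^-1 *: (s a + s b)) I.
  have := HN a Na; have := HN b Nb.
  move: (a.+1%:R^-1) (b.+1%:R^-1) => qa qb; lra.
exists k => y; apply/eqP; rewrite -subr_eq0; apply/eqP.
apply: (@cvg_quadratic_eq0 _ (fun n => ip (s n) y - F y) _ (ip y y)).
- have ip_y x : ip x y ^+ 2 <= ip y y * ip x x.
    by rewrite mulrC; exact: ip_CauchySchwarz.
  move=> e /(bil_cvgl hip hb ip_y sk)[N HN].
  by exists N => n /HN; rewrite opprB addrA subrK.
- exact: ip_ge0.
- move=> n t; have := m_min (s n + t *: y) I; have := (hs n).2.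
  rewrite /J (bil_expand hb) FD FZ; move: (n.+1%:R^-1) => q; lra.
Qed.

End Riesz.

Lemma incr_ge_id (p : nat -> nat) : (forall n, (p n < p n.+1)%N) -> forall n, (n <= p n)%N.
Proof. by move=> hp; elim=> [|n IH] //; exact: leq_ltn_trans IH (hp n). Qed.

Section Rayleigh.
Variables (R : realType) (V H : lmodType R) (ipV : V -> V -> R) (ipH : H -> H -> R).
Hypotheses (hV : is_inner_product ipV) (hH : is_inner_product ipH).
Hypothesis hcV : ip_complete ipV.
Variable gamma : {linear V -> H}.
Hypothesis gcomp : op_compact ipV ipH gamma.
Variable Cg : R.
Hypothesis hCg : forall x, ipH (gamma x) (gamma x) <= Cg * ipV x x.
Variable S : V -> Prop.
Hypothesis S_lin : forall a x y, S x -> S y -> S (a *: x + y).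
Hypothesis S_closed : forall s l, (forall n, S (s n)) -> cvgV ipV s l -> S l.
Variables (m : V -> V -> R) (D : R).
Hypothesis hm : symbilinear m.
Hypothesis m_bound : forall x y, m x y ^+ 2 <= D * ipH (gamma x) (gamma x) * ipV y y.

Let hbV := ip_symbilinear hV.
Let hbH := ip_symbilinear hH.

Let SD x y : S x -> S y -> S (x + y).
Proof. by move=> Sx Sy; have := S_lin 1 Sx Sy; rewrite scale1r. Qed.

Let SZ a x : S x -> S (a *: x).
Proof. by move=> Sx; have := S_lin (a - 1) Sx Sx; rewrite scalerBl scale1r subrK. Qed.

Let E := `|D| * `|Cg|.

Let E_ge0 : 0 <= E. Proof. by rewrite mulr_ge0. Qed.

Let m_bound_ip x y : m x y ^+ 2 <= E * ipV x x * ipV y y.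
Proof.
have g0 := ip_ge0 hH (gamma x); have X0 := ip_ge0 hV x; have Y0 := ip_ge0 hV y.
apply: le_trans (m_bound x y) _; rewrite ler_wpM2r // /E -mulrA.
apply: le_trans (ler_wpM2r g0 (ler_norm D)) _; rewrite ler_wpM2l //.
by rewrite (le_trans (hCg x)) // ler_wpM2r // ler_norm.
Qed.

Section Minimizer.
Variables (nu : R) (z : nat -> V) (l : H).
Hypotheses (nu0 : nu < 0) (Sz : forall n, S (z n)) (z1 : forall n, ipV (z n) (z n) = 1).
Hypothesis m_ge : forall x, S x -> nu * ipV x x <= m x x.
Hypothesis mz : forall n, m (z n) (z n) < nu + n.+1%:R^-1.
Hypothesis gz : cvgV ipH (fun n => gamma (z n)) l.

Let Q x y := m x y + - nu * ipV x y.

Let hQ : symbilinear Q := symbilinear_comb (- nu) hm hbV.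

Let Q_ge0 x : S x -> 0 <= Q x x.
Proof. by move=> /m_ge; rewrite /Q mulNr subr_ge0. Qed.

Let Qz n : Q (z n) (z n) < n.+1%:R^-1.
Proof. by rewrite /Q z1 mulNr mulr1; have := mz n; move: (n.+1%:R^-1) => q; lra. Qed.

Let m_diag_sq_lt x (g : R) : ipV x x <= 4 -> ipH (gamma x) (gamma x) < g ->
  m x x ^+ 2 < (`|D| + 1) * g * 4.
Proof.
move=> x4 gx; have g0 := ip_ge0 hH (gamma x); have X0 := ip_ge0 hV x.
have D1 : 0 < `|D| + 1 by rewrite ltr_pwDr.
apply: le_lt_trans (m_bound x x) _.
apply: (@le_lt_trans _ _ ((`|D| + 1) * ipH (gamma x) (gamma x) * 4)).
  apply: (@le_trans _ _ ((`|D| + 1) * ipH (gamma x) (gamma x) * ipV x x)).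
    by rewrite ler_wpM2r // ler_wpM2r // (le_trans (ler_norm D)) // lerDl.
  by rewrite ler_wpM2l // mulr_ge0 // ltW.
by rewrite ltr_pM2r // ltr_pM2l.
Qed.

(* Q (z a - z b) is small by the parallelogram law, and m (z a - z b) is small
   because gamma (z n) converges; their difference is -nu |z a - z b|^2. *)
Lemma minimizing_cauchy (e : R) : 0 < e -> exists N, forall a b,
  (N <= a)%N -> (N <= b)%N -> ipV (z a - z b) (z a - z b) < e.
Proof.
move=> e0; have [e' [e'_def e'0]] : exists e', e' = e * - nu /\ 0 < e'.
  by exists (e * - nu); rewrite mulr_gt0 // oppr_gt0.
have [N1 HN1] := invSn_lt (divr_gt0 e'0 (ltr0n R 8)).
have D1 : 0 < `|D| + 1 by rewrite ltr_pwDr.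
have [g [g_def g0]] : exists g, (`|D| + 1) * g * 4 = (e' / 2) ^+ 2 /\ 0 < g.
  exists ((e' / 2) ^+ 2 / ((`|D| + 1) * 4)); split; first by field; rewrite gt_eqF.
  by rewrite divr_gt0 ?exprn_gt0 ?mulr_gt0 ?invr_gt0 ?ltr0n.
have [N2 HN2] := gz (divr_gt0 g0 (ltr0n R 4)).
exists (maxn N1 N2) => a b; rewrite !geq_max => /andP[aN1 aN2] /andP[bN1 bN2].
set d := z a - z b.
have Qd : Q d d <= 2 * Q (z a) (z a) + 2 * Q (z b) (z b).
  have := bil_parallelogram hQ (z a) (z b); have := Q_ge0 (SD (Sz a) (Sz b)); lra.
have d4 : ipV d d <= 4.
  have := bil_parallelogram hbV (z a) (z b); have := ip_ge0 hV (z a + z b).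
  by rewrite !z1 -/d; lra.
have gd : ipH (gamma d) (gamma d) < g.
  have -> : gamma d = (gamma (z a) - l) + (l - gamma (z b)).
    by rewrite linearB addrA subrK.
  apply: le_lt_trans (ipD_le hH _ _) _; rewrite (bil_diagBC hbH l).
  by have := HN2 a aN2; have := HN2 b bN2; lra.
have md : - (e' / 2) < m d d.
  have e'2 : 0 <= e' / 2 by rewrite divr_ge0 // ltW.
  have : `|m d d| < e' / 2.
    rewrite -(ltr_pXn2r (ltn0Sn 1)) ?nnegrE // real_normK ?num_real // -g_def.
    exact: m_diag_sq_lt.
  by rewrite ltr_norml => /andP[].
suff : ipV d d * - nu < e' by rewrite e'_def ltr_pM2r ?oppr_gt0.
have -> : ipV d d * - nu = Q d d - m d d by rewrite /Q; ring.
have := Qz a; have := Qz b; have := HN1 a aN1; have := HN1 b bN1; move: Qd md.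
move: (Q d d) (m d d) (Q (z a) _) (Q (z b) _) (a.+1%:R^-1) (b.+1%:R^-1).
by move=> q x qa qb ia ib; lra.
Qed.

Lemma minimizing_limit phi : cvgV ipV z phi -> forall y, S y -> m phi y = nu * ipV phi y.
Proof.
move=> zphi y Sy; suff : Q phi y = 0 by rewrite /Q mulNr => /eqP; rewrite subr_eq0 => /eqP.
have Q_bound x : Q x y ^+ 2 <= ((2 * E + 2 * nu ^+ 2) * ipV y y) * ipV x x.
  have := m_bound_ip x y; have := ip_CauchySchwarz hV x y.
  have := ip_ge0 hV x; have := ip_ge0 hV y; rewrite /Q.
  move: (m x y) (ipV x y) (ipV x x) (ipV y y) => a b X Y h1 h2 h3 h4.
  have := sqr_ge0 (a + nu * b); have := sqr_ge0 nu; nra.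
apply: (@cvg_quadratic_eq0 _ (fun n => Q (z n) y) _ (Q y y)).
- exact (bil_cvgl hV hQ Q_bound zphi).
- exact: Q_ge0.
move=> n t /=; have := Q_ge0 (SD (Sz n) (SZ t Sy)); rewrite (bil_expand hQ).
have := Qz n; move: (n.+1%:R^-1) (Q (z n) (z n)) (2 * t * _) (t ^+ 2 * _).
by move=> q a b c; lra.
Qed.

End Minimizer.

Lemma rayleigh : (exists v, S v /\ m v v < 0) -> exists phi nu,
  [/\ S phi, phi <> 0, nu < 0 & forall y, S y -> m phi y = nu * ipV phi y].
Proof.
move=> [v [Sv mv]].
have v0 : 0 < ipV v v.
  by apply: (ip_gt0 hV) => v0; move: mv; rewrite v0 (bil0l hm) ltxx.
have [v1_unit mv1] := ip_normalize hV hm v0; set v1 := _ *: v in v1_unit mv1.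
pose T x := S x /\ ipV x x = 1.
have T_lb x : T x -> - (E + 1) <= m x x.
  case=> _ x1; have := m_bound_ip x x; rewrite x1 !mulr1 => mE.
  suff : `|m x x| <= E + 1 by rewrite ler_norml => /andP[].
  rewrite -(ler_pXn2r (ltn0Sn 1)) ?nnegrE ?addr_ge0 // real_normK ?num_real //.
  apply: le_trans mE _; rewrite -subr_ge0.
  have -> : (E + 1) ^+ 2 - E = E ^+ 2 + E + 1 by ring.
  by rewrite !addr_ge0 ?sqr_ge0.
have Tv1 : T v1 by split; [exact: SZ | exact: v1_unit].
have [nu [nu_min [s hs]]] := minimizing_sequence (ex_intro T v1 Tv1) T_lb.
have nu0 : nu < 0.
  by apply: le_lt_trans (nu_min _ Tv1) _; rewrite mv1 pmulr_llt0 ?invr_gt0.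
have m_ge x : S x -> nu * ipV x x <= m x x.
  move=> Sx; have [->|x0] := eqVneq x 0; first by rewrite (bil0l hbV) (bil0l hm) mulr0.
  have xp : 0 < ipV x x by apply: (ip_gt0 hV); exact/eqP.
  have [x1 mx] := ip_normalize hV hm xp.
  have := nu_min _ (conj (SZ _ Sx) x1); rewrite mx ler_pdivlMr //.
have [p [p_incr [l hl]]] : exists p : nat -> nat, (forall n, (p n < p n.+1)%N) /\
    exists l : H, forall e : R, 0 < e -> exists N : nat, forall n : nat,
      (N <= n)%N -> ipnorm ipH (gamma (s (p n)) - l) < e.
  by apply: gcomp; exists 1 => n; rewrite /ipnorm (hs n).1.2 sqrtr1.
pose z n := s (p n).
have Sz n : S (z n) := (hs (p n)).1.1.
have z1 n : ipV (z n) (z n) = 1 := (hs (p n)).1.2.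
have mz n : m (z n) (z n) < nu + n.+1%:R^-1.
  by apply: lt_le_trans (hs (p n)).2 _; rewrite lerD2l invSn_le // incr_ge_id.
have gz : cvgV ipH (fun n => gamma (z n)) l by exact: cvgV_ipnorm.
have [phi zphi] := cvgV_cauchy hcV (minimizing_cauchy nu0 Sz z1 m_ge mz gz).
exists phi, nu; split => //.
- exact: S_closed Sz zphi.
- move=> phi0; have half : 0 < 2^-1 :> R by rewrite invr_gt0.
  have [N HN] := zphi _ half; have := HN N (leqnn N).
  by rewrite phi0 subr0 z1; lra.
- by move=> y Sy; apply: (minimizing_limit Sz z1 m_ge mz zphi Sy).
Qed.

End Rayleigh.

Section GramOperator.
Variables (R : realType) (V H : lmodType R) (ipV : V -> V -> R) (ipH : H -> H -> R).
Hypotheses (hV : is_inner_product ipV) (hH : is_inner_product ipH).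
Variable gamma : {linear V -> H}.

Let hbV := ip_symbilinear hV.
Let hbH := ip_symbilinear hH.

Definition gform x y := ipH (gamma x) (gamma y).

Lemma gform_symbilinear : symbilinear gform.
Proof.
split=> [u v|a u v w]; first exact: (bilC hbH).
by rewrite /gform linearP (bilDl hbH) (bilZl hbH).
Qed.

Let hg := gform_symbilinear.

Lemma gform_ge0 x : 0 <= gform x x. Proof. exact: (ip_ge0 hH). Qed.

(* Continuity at 0 bounds |gamma| by 1 on the ball of radius d, hence
   |gamma x|^2 <= (4 / d^2) |x|^2 after rescaling x to norm d / 2. *)
Lemma gform_bounded : op_continuous ipV ipH gamma ->
  exists Cg, 0 <= Cg /\ forall x, gform x x <= Cg * ipV x x.
Proof.
move=> gcont; have [d [d0 hd]] := gcont 0 1 ltr01.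
exists (4 / d ^+ 2); split=> [|x]; first by rewrite divr_ge0 ?sqr_ge0.
have [->|x0] := eqVneq x 0; first by rewrite /gform linear0 (bil0l hbH) (bil0l hbV) mulr0.
have xp : 0 < ipV x x by apply: (ip_gt0 hV); exact/eqP.
have [x1_unit gx1] := ip_normalize hV hg xp; set x1 := _ *: x in x1_unit gx1.
have d2 : 0 < d / 2 by rewrite divr_gt0.
have y_small : ipnorm ipV ((d / 2) *: x1 - 0) < d.
  by rewrite subr0 ipnorm_lt // (bilZZ hbV) x1_unit mulr1 ltr_pXn2r ?nnegrE ?ltW //; lra.
have := hd _ y_small; rewrite linear0 subr0 ipnorm_lt // expr1n -/(gform _ _).
rewrite (bilZZ hg) gx1 mulrA ltr_pdivrMr // mul1r => h.
rewrite -(@ler_pM2l _ ((d / 2) ^+ 2)) ?exprn_gt0 // mulrA.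
have -> : (d / 2) ^+ 2 * (4 / d ^+ 2) = 1 by field; rewrite gt_eqF.
by rewrite mul1r ltW.
Qed.

Lemma gram_operator_exists Cg : ip_complete ipV ->
  (forall x, gform x x <= Cg * ipV x x) ->
  exists K : V -> V, forall x v, ipV (K x) v = gform x v.
Proof.
move=> hc hCg.
suff /choice[K hK] : forall x, exists k, forall v, ipV k v = gform x v by exists K.
move=> x; have gx_lin a u v : gform x (a *: u + v) = a * gform x u + gform x v.
  by rewrite (bilDr hg) (bilZr hg).
apply: (@riesz_representation _ _ _ hV hc _ gx_lin (gform x x * Cg)) => v.
apply: le_trans (bil_CauchySchwarz hg x v gform_ge0) _.
by rewrite -mulrA ler_wpM2l ?gform_ge0.
Qed.

Section Gram.
Variable Cg : R.
Hypotheses (Cg0 : 0 <= Cg) (hCg : forall x, gform x x <= Cg * ipV x x).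
Variable K : V -> V.
Hypothesis hK : forall x v, ipV (K x) v = gform x v.

Lemma gram_lin a x y : K (a *: x + y) = a *: K x + K y.
Proof.
by apply: (ip_ext hV) => v; rewrite hK (bilDl hbV) (bilZl hbV) !hK; exact: hg.2.
Qed.

Lemma gram0 : K 0 = 0.
Proof. by apply: (ip_ext hV) => v; rewrite hK (bil0l hg) (bil0l hbV). Qed.

Lemma gramD x y : K (x + y) = K x + K y.
Proof. by have := gram_lin 1 x y; rewrite !scale1r. Qed.

Lemma gramZ a x : K (a *: x) = a *: K x.
Proof. by have := gram_lin a x 0; rewrite !addr0 gram0 addr0. Qed.

Lemma gramB x y : K (x - y) = K x - K y.
Proof. by rewrite gramD -scaleN1r gramZ scaleN1r. Qed.

Lemma gram_selfadjoint x y : ipV (K x) y = ipV x (K y).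
Proof. by rewrite hK (bilC hg) -hK (bilC hbV). Qed.

Lemma gram_bound x : ipV (K x) (K x) <= Cg ^+ 2 * ipV x x.
Proof.
have cs := bil_CauchySchwarz hg x (K x) gform_ge0; rewrite -hK in cs.
have g1 := hCg x; have g2 := hCg (K x); have X0 := ip_ge0 hV x.
have N0 := ip_ge0 hV (K x); have b1 := gform_ge0 x; have b2 := gform_ge0 (K x).
move: cs g1 g2 X0 N0 b1 b2.
move: (ipV (K x) (K x)) (gform x x) (gform (K x) (K x)) (ipV x x) => N a b X.
move=> cs g1 g2 X0 N0 b1 b2.
have ab : a * b <= (Cg * X) * (Cg * N) by apply: ler_pM.
have N2 : N ^+ 2 <= Cg ^+ 2 * X * N.
  by apply: le_trans cs _; move: ab; rewrite expr2 -!mulrA (mulrCA X Cg).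
have [->|Nn0] := eqVneq N 0; first by rewrite mulr_ge0 ?sqr_ge0.
by move: N2; rewrite expr2 ler_pM2r // lt_neqAle eq_sym Nn0.
Qed.

Hypotheses (hcV : ip_complete ipV) (gcomp : op_compact ipV ipH gamma).

Lemma gram_eigenvector_in (S : V -> Prop) :
  (forall a x y, S x -> S y -> S (a *: x + y)) ->
  (forall s l, (forall n, S (s n)) -> cvgV ipV s l -> S l) ->
  (forall x, S x -> S (K x)) ->
  forall v, S v -> 0 < gform v v ->
  exists psi k, [/\ S psi, psi <> 0, 0 < k & K psi = k *: psi].
Proof.
move=> S_lin S_closed SK v Sv gv.
have hn : symbilinear (fun x y => - gform x y).
  by split=> [x y|a x y z]; [rewrite (bilC hg) | rewrite hg.2; ring].
have hn_bound x y : (- gform x y) ^+ 2 <= Cg * ipH (gamma x) (gamma x) * ipV y y.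
  rewrite sqrrN; apply: le_trans (bil_CauchySchwarz hg x y gform_ge0) _.
  by rewrite -mulrA mulrCA ler_wpM2l ?gform_ge0.
have neg : exists v, S v /\ - gform v v < 0 by exists v; rewrite oppr_lt0.
have [psi [nu [Spsi psi0 nu0 hpsi]]] :=
  rayleigh hV hH hcV gcomp hCg S_lin S_closed hn hn_bound neg.
pose r := nu *: psi + K psi.
have r_orth y : S y -> ipV r y = 0.
  by move=> Sy; rewrite /r (bilDl hbV) (bilZl hbV) hK -(hpsi y Sy) addNr.
have r0 : r = 0 := ip_eq0 hV (r_orth _ (S_lin nu _ _ Spsi (SK _ Spsi))).
exists psi, (- nu); split => //; first by rewrite oppr_gt0.
by move/eqP: r0; rewrite /r addrC addr_eq0 => /eqP ->; rewrite scaleNr.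
Qed.

Lemma eigenvalue_of_gram_eigenvector (ls c : R) phi k :
  phi <> 0 -> k != 0 -> K phi = k *: phi -> (1 - ls * k) ^+ 2 <= c ->
  exists lam, is_eigenvalue ipV ipH gamma lam /\ `|(lam - ls) / lam| <= Num.sqrt c.
Proof.
move=> phi0 k0 Kphi hc; exists k^-1; split.
  exists phi; split => // v.
  by rewrite -/(gform phi v) -hK Kphi (bilZl hbV) mulrA mulVf // mul1r.
have -> : (k^-1 - ls) / k^-1 = 1 - ls * k by field.
by rewrite -sqrtr_sqr; exact: ler_wsqrtr.
Qed.

Section QuadraticShift.
Variables (c ls : R).

(* Lop = (1 - ls K)^2 - c. *)
Definition Lop y := (1 - c) *: y - (2 * ls) *: K y + ls ^+ 2 *: K (K y).

Lemma Lop_lin a x y : Lop (a *: x + y) = a *: Lop x + Lop y.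
Proof.
apply: (ip_ext hV) => v; rewrite /Lop !gram_lin.
do 4 rewrite ?(bilDl hbV) ?(bilNl hbV) ?(bilZl hbV); ring.
Qed.

Lemma Lop0 : Lop 0 = 0.
Proof. by rewrite /Lop gram0 gram0 !scaler0 subrr addr0. Qed.

Lemma LopZ a x : Lop (a *: x) = a *: Lop x.
Proof. by have := Lop_lin a x 0; rewrite !addr0 Lop0 addr0. Qed.

Lemma Lop_gram x : Lop (K x) = K (Lop x).
Proof. by rewrite /Lop gramD gramB !gramZ. Qed.

Lemma Lop_selfadjoint x y : ipV (Lop x) y = ipV x (Lop y).
Proof.
rewrite /Lop; do 4 rewrite ?(bilDl hbV) ?(bilNl hbV) ?(bilZl hbV).
by do 4 rewrite ?(bilDr hbV) ?(bilNr hbV) ?(bilZr hbV); rewrite !gram_selfadjoint.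
Qed.

Lemma Lop_bounded : exists EL, 0 <= EL /\ forall y, ipV (Lop y) (Lop y) <= EL * ipV y y.
Proof.
exists (4 * (1 - c) ^+ 2 + 4 * (2 * ls) ^+ 2 * Cg ^+ 2 + 2 * (ls ^+ 2) ^+ 2 * (Cg ^+ 2) ^+ 2).
split.
  have := sqr_ge0 (1 - c); have := sqr_ge0 (2 * ls); have := sqr_ge0 (ls ^+ 2).
  have := sqr_ge0 Cg; have := sqr_ge0 (Cg ^+ 2).
  move: ((1 - c) ^+ 2) ((2 * ls) ^+ 2) ((ls ^+ 2) ^+ 2) (Cg ^+ 2) ((Cg ^+ 2) ^+ 2).
  by move=> a b d e f *; nra.
move=> y; rewrite /Lop.
have h1 := ipD_le hV ((1 - c) *: y - (2 * ls) *: K y) (ls ^+ 2 *: K (K y)).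
have h2 := ipD_le hV ((1 - c) *: y) (- ((2 * ls) *: K y)).
rewrite (bilNl hbV) (bilNr hbV) opprK !(bilZZ hbV) in h2; rewrite (bilZZ hbV) in h1.
have KK : ipV (K (K y)) (K (K y)) <= (Cg ^+ 2) ^+ 2 * ipV y y.
  apply: le_trans (gram_bound (K y)) _; rewrite [(Cg ^+ 2) ^+ 2]expr2 -mulrA.
  by rewrite ler_wpM2l ?sqr_ge0 // gram_bound.
have h3 : (2 * ls) ^+ 2 * ipV (K y) (K y) <= (2 * ls) ^+ 2 * (Cg ^+ 2 * ipV y y).
  by rewrite ler_wpM2l ?sqr_ge0 // gram_bound.
have h4 : (ls ^+ 2) ^+ 2 * ipV (K (K y)) (K (K y)) <= (ls ^+ 2) ^+ 2 * ((Cg ^+ 2) ^+ 2 * ipV y y).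
  by rewrite ler_wpM2l ?sqr_ge0.
move: h1 h2 h3 h4.
move: (ipV _ _) (ipV (_ - _) _) (ipV (K y) (K y)) (ipV (K (K y)) (K (K y))) (ipV y y).
move: ((1 - c) ^+ 2) ((2 * ls) ^+ 2) ((ls ^+ 2) ^+ 2) (Cg ^+ 2) ((Cg ^+ 2) ^+ 2).
by move=> a b d e f A B X Y Z h1 h2 h3 h4; lra.
Qed.

Lemma LopK_lin a x y : Lop (K (a *: x + y)) = a *: Lop (K x) + Lop (K y).
Proof. by rewrite gram_lin Lop_lin. Qed.

Lemma LopKB x y : Lop (K (x - y)) = Lop (K x) - Lop (K y).
Proof.
have -> : x - y = (-1) *: y + x by rewrite scaleN1r addrC.
by rewrite LopK_lin scaleN1r addrC.
Qed.

Definition mform x y := gform x (Lop y).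

Lemma mform_gram x y : mform x y = ipV (Lop (K x)) y.
Proof. by rewrite /mform -hK Lop_selfadjoint. Qed.

Lemma mform_symbilinear : symbilinear mform.
Proof.
split=> [x y|a x y z]; last by rewrite /mform; exact: hg.2.
by rewrite !mform_gram Lop_selfadjoint gram_selfadjoint -Lop_gram (bilC hbV).
Qed.

(* If the quadratic form vanishes at a point where it is minimal,
   then Lop K u = 0, and Lop = ls^2 (K - r1) (K - r2) splits. *)
Lemma eigenvector_bound_mform_ge0 u : (forall v, 0 <= mform v v) -> mform u u = 0 ->
  0 < gform u u -> ls != 0 -> 0 <= c ->
  exists phi k, [/\ phi <> 0, k != 0, K phi = k *: phi & (1 - ls * k) ^+ 2 <= c].
Proof.
move=> m_ge0 mu gu ls0 c0.
have mu_orth y : mform u y = 0.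
  have := bil_CauchySchwarz mform_symbilinear u y m_ge0; rewrite mu mul0r => h.
  by apply/eqP; rewrite -sqrf_eq0 eq_le h sqr_ge0.
have Lz : Lop (K u) = 0 by apply: (ip_ext hV) => y; rewrite -mform_gram mu_orth (bil0l hbV).
set z := K u in Lz.
have z0 : z <> 0.
  move=> z0; have : ipV z u = gform u u by rewrite hK.
  by rewrite z0 (bil0l hbV) => h; move: gu; rewrite -h ltxx.
pose sc := Num.sqrt c.
have sc2 : sc ^+ 2 = c by rewrite sqr_sqrtr.
have sc0 : 0 <= sc := sqrtr_ge0 c.
pose r1 := (1 + sc) / ls; pose r2 := (1 - sc) / ls.
pose y := K z - r2 *: z.
have Ky : K y = r1 *: y.
  apply/eqP; rewrite -subr_eq0; apply/eqP.
  have -> : K y - r1 *: y = (ls ^+ 2)^-1 *: Lop z.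
    apply: (ip_ext hV) => v; rewrite /y /Lop gramB gramZ.
    do 5 rewrite ?(bilDl hbV) ?(bilNl hbV) ?(bilZl hbV).
    by rewrite /r1 /r2 -sc2; field.
  by rewrite Lz scaler0.
have [y0|yn0] := eqVneq y 0.
  have Kz : K z = r2 *: z by apply/eqP; rewrite -subr_eq0; apply/eqP.
  have r20 : r2 != 0.
    apply/negP => /eqP r20; apply: z0; apply: (ip_eq0 hV).
    by rewrite {1}/z gram_selfadjoint Kz r20 scale0r (bil0r hbV).
  exists z, r2; split => //.
  have -> : 1 - ls * r2 = sc by rewrite /r2; field.
  by rewrite sc2.
exists y, r1; split => //; first exact/eqP.
  rewrite /r1 mulf_eq0 negb_or invr_eq0 ls0 andbT.
  by rewrite gt_eqF // ltr_pwDl.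
have -> : 1 - ls * r1 = - sc by rewrite /r1; field.
by rewrite sqrrN sc2.
Qed.

Section BoundedShift.
Variable EL : R.
Hypotheses (EL0 : 0 <= EL) (hEL : forall y, ipV (Lop y) (Lop y) <= EL * ipV y y).

Lemma mform_bound x y : mform x y ^+ 2 <= (Cg * EL) * ipH (gamma x) (gamma x) * ipV y y.
Proof.
apply: le_trans (bil_CauchySchwarz hg x (Lop y) gform_ge0) _.
have -> : Cg * EL * gform x x * ipV y y = gform x x * (Cg * EL * ipV y y) by ring.
rewrite ler_wpM2l ?gform_ge0 //.
by apply: le_trans (hCg (Lop y)) _; rewrite -mulrA ler_wpM2l.
Qed.

Lemma Lop_gram_bound x : ipV (Lop (K x)) (Lop (K x)) <= EL * Cg ^+ 2 * ipV x x.
Proof. by apply: le_trans (hEL (K x)) _; rewrite -mulrA ler_wpM2l // gram_bound. Qed.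

Lemma Lop_gram_eigenspace_closed nu s l : (forall n, Lop (K (s n)) = nu *: s n) ->
  cvgV ipV s l -> Lop (K l) = nu *: l.
Proof.
move=> hs sl; apply/eqP; rewrite -subr_eq0; apply/eqP; apply: (ip_eq0 hV).
apply/eqP; rewrite eq_le ip_ge0 // andbT; apply/ler_addgt0Pr => e e0; rewrite add0r.
pose G := 2 * (EL * Cg ^+ 2) + 2 * nu ^+ 2 + 1.
have G0 : 0 < G.
  have := sqr_ge0 nu; have : 0 <= EL * Cg ^+ 2 by rewrite mulr_ge0 ?sqr_ge0.
  by rewrite /G; move: (EL * Cg ^+ 2) (nu ^+ 2) => p q; lra.
have [N HN] := sl (e / G) (divr_gt0 e0 G0).
have -> : Lop (K l) - nu *: l = Lop (K (l - s N)) - nu *: (l - s N).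
  by rewrite LopKB hs scalerBr opprB addrA subrK.
set d := l - s N.
have hd : ipV d d * G < e by rewrite -ltr_pdivlMr // /d (bil_diagBC hbV) HN.
have h1 := ipD_le hV (Lop (K d)) (- (nu *: d)).
rewrite (bilNl hbV) (bilNr hbV) opprK (bilZZ hbV) in h1.
have h2 := Lop_gram_bound d; have h3 := ip_ge0 hV d.
move: h1 h2 h3 hd; rewrite /G.
move: (ipV (_ - _) _) (ipV (Lop (K d)) (Lop (K d))) (ipV d d) (EL * Cg ^+ 2) (nu ^+ 2).
by move=> X A D p q h1 h2 h3 hd; nra.
Qed.

(* A negative value of mform gives, by minimisation, an eigenvector of Lop K with
   negative eigenvalue nu; inside that (K-invariant) eigenspace, K has an eigenvector,
   on which Lop acts by q = (1 - ls k)^2 - c with k q = nu < 0. *)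
Lemma eigenvector_bound_mform_neg : (exists v, mform v v < 0) ->
  exists phi k, [/\ phi <> 0, k != 0, K phi = k *: phi & (1 - ls * k) ^+ 2 <= c].
Proof.
move=> [v mv].
have [phi [nu [_ phi0 nu0 hphi]]] := @rayleigh _ _ _ _ _ hV hH hcV _ gcomp _ hCg
  (fun _ => True) (fun _ _ _ _ _ => I) (fun _ _ _ _ => I) _ _ mform_symbilinear mform_bound
  (ex_intro _ v (conj I mv)).
have phi0' : phi != 0 by apply/eqP.
have LKphi : Lop (K phi) = nu *: phi.
  by apply: (ip_ext hV) => y; rewrite -mform_gram hphi // (bilZl hbV).
pose E x := Lop (K x) = nu *: x.
have E_lin a x y : E x -> E y -> E (a *: x + y).
  by rewrite /E LopK_lin => -> ->; rewrite scalerDr !scalerA (mulrC a nu).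
have EK x : E x -> E (K x) by rewrite /E => hx; rewrite Lop_gram hx gramZ.
have gphi : 0 < gform phi phi.
  apply: (ip_gt0 hH) => gphi0.
  have Kphi0 : K phi = 0.
    by apply: (ip_ext hV) => y; rewrite hK /gform gphi0 (bil0l hbH) (bil0l hbV).
  move/esym/eqP: LKphi; rewrite Kphi0 Lop0 scaler_eq0 (negPf phi0') orbF => /eqP nu_eq.
  by move: nu0; rewrite nu_eq ltxx.
have [psi [k [Epsi psi0 k0 Kpsi]]] :=
  gram_eigenvector_in E_lin (@Lop_gram_eigenspace_closed nu) EK LKphi gphi.
pose q := (1 - c) - 2 * ls * k + ls ^+ 2 * k ^+ 2.
have Lpsi : Lop psi = q *: psi.
  rewrite /Lop Kpsi gramZ Kpsi !scalerA -!scalerBl -scalerDl /q; congr (_ *: _); ring.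
have kq : k * q = nu.
  apply/eqP; rewrite -subr_eq0.
  have : (k * q - nu) *: psi = 0 by rewrite scalerBl -scalerA -Lpsi -LopZ -Kpsi Epsi subrr.
  by move/eqP; rewrite scaler_eq0 orbC => /orP[/eqP //|].
exists psi, k; split => //; first by rewrite gt_eqF.
have q0 : q < 0 by rewrite -(pmulr_rlt0 _ k0) kq.
have -> : (1 - ls * k) ^+ 2 = q + c by rewrite /q; ring.
by rewrite gerDr ltW.
Qed.

End BoundedShift.
End QuadraticShift.

Lemma gram_eigenvector_bound u ls : 0 < gform u u ->
  exists phi k, [/\ phi <> 0, k != 0, K phi = k *: phi &
    (1 - ls * k) ^+ 2 <= gform (u - ls *: K u) (u - ls *: K u) / gform u u].
Proof.
move=> gu; have [->|ls0] := eqVneq ls 0.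
  have [psi [k [_ psi0 k0 Kpsi]]] := @gram_eigenvector_in (fun _ => True)
    (fun _ _ _ _ _ => I) (fun _ _ _ _ => I) (fun _ _ => I) _ I gu.
  exists psi, k; split => //; first by rewrite gt_eqF.
  by rewrite mul0r subr0 expr1n scale0r subr0 divff // gt_eqF.
set c := _ / _.
have c0 : 0 <= c by rewrite divr_ge0 ?gform_ge0.
have [EL [EL0 hEL]] := Lop_bounded c ls.
(* mform u u = |gamma (u - ls K u)|^2 - c |gamma u|^2, zero by the choice of c. *)
have mu0 : mform c ls u u = 0.
  have e1 : gform (K u) (K u) = gform u (K (K u)) by rewrite -!hK (bilC hbV).
  have : c * gform u u = gform (u - ls *: K u) (u - ls *: K u) by rewrite /c divfK // gt_eqF.
  rewrite (bilBl hg) !(bilBr hg) !(bilZl hg) !(bilZr hg) (bilC hg (K u) u) e1.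
  rewrite /mform /Lop (bilDr hg) (bilBr hg) !(bilZr hg).
  by move: (gform u u) (gform u (K u)) (gform u (K (K u))) => A B C; lra.
have [neg|nonneg] := pselect (exists v, mform c ls v v < 0).
  exact: eigenvector_bound_mform_neg EL0 hEL neg.
apply: (eigenvector_bound_mform_ge0 (u := u)) => // v.
by rewrite leNgt; apply/negP => mv; apply: nonneg; exists v.
Qed.

End Gram.
End GramOperator.

Theorem theorem3p3 (R : realType) (V H : lmodType R)
    (ipV : V -> V -> R) (ipH : H -> H -> R)
    (hV : is_hilbert ipV) (hH : is_hilbert ipH)
    (gamma : {linear V -> H})
    (gcont : op_continuous ipV ipH gamma)
    (gcomp : op_compact ipV ipH gamma)
    (ustar : V) (lamstar : R) (w : V)
    (hw : forall v : V, ipV w v = ipV ustar v - lamstar * ipH (gamma ustar) (gamma v))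
    (hgu : gamma ustar <> 0) :
  exists lam : R, is_eigenvalue ipV ipH gamma lam /\
    `|(lam - lamstar) / lam| <= ipnorm ipH (gamma w) / ipnorm ipH (gamma ustar).
Proof.
case: hV => hVi hVc; case: hH => hHi _.
have [Cg [Cg0 hCg]] := gform_bounded hVi hHi gcont.
have [K hK] := gram_operator_exists hVi hHi hVc hCg.
have gu : 0 < gform ipH gamma ustar ustar := ip_gt0 hHi hgu.
have w_def : w = ustar - lamstar *: K ustar.
  apply: (ip_ext hVi) => v.
  by rewrite hw (bilBl (ip_symbilinear hVi)) (bilZl (ip_symbilinear hVi)) hK.
have [phi [k [phi0 k0 Kphi bound]]] :=
  gram_eigenvector_bound hVi hHi Cg0 hCg hK hVc gcomp lamstar gu.
rewrite -w_def in bound.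
have -> : ipnorm ipH (gamma w) / ipnorm ipH (gamma ustar) =
    Num.sqrt (gform ipH gamma w w / gform ipH gamma ustar ustar).
  by rewrite sqrtrM ?sqrtrV ?gform_ge0 // ltW.
exact (eigenvalue_of_gram_eigenvector hVi hK phi0 k0 Kphi bound).
Qed.
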